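(* Let $R$ be a commutative associative ring with unit element, let $b\in R$, and let $m\ge 1$. Let $T_{b+1,b}$ be the symmetric $2m\times 2m$ matrix over $R$ whose diagonal entries are $0$, whose entries in positions $(i,i+1)$ and $(i+1,i)$ ($1\le i\le 2m-1$) equal $b+1$, and all of whose other entries equal $b$. Then $\mathrm{Hf}(T_{b+1,b})=y_m(b)$, where $y_m(x)=\sum_{k=0}^m \frac{(m+k)!}{k!\,(m-k)!}\left(\frac{x}{2}\right)^k=\sum_{k=0}^m \frac{(m+k)!}{k!\,(m-k)!\,2^k}x^k$ is the Bessel polynomial of degree $m$ (its coefficients are integers, so it can be evaluated in $R$).
   Context: For a symmetric matrix $A=(a_{ij})$ of order $n=2m$ over a commutative ring, the hafnian is $\mathrm{Hf}(A)=\sum a_{i_1i_2}a_{i_3i_4}\cdots a_{i_{n-1}i_n}$, where the sum runs over all partitions of $\{1,\dots,n\}$ into $m$ disjoint unordered pairs $\{i_1,i_2\},\dots,\{i_{n-1},i_n\}$ (each partition counted once). Diagonal entries do not enter the definition. *)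

From HB Require Import structures.
From mathcomp Require Import all_boot all_order all_algebra all_fingroup.
Set Implicit Arguments. Unset Strict Implicit. Unset Printing Implicit Defensive.
Import GRing.Theory.
Local Open Scope ring_scope.

(* Perfect matchings of {0,..,n-1} (partitions into unordered pairs) are
   encoded bijectively as fixed-point-free involutions s : a pair {i, s i}.
   Each pair is counted once via its smaller element i < s i. *)
Definition fpf_involution (n : nat) (s : 'S_n) : bool :=
  [forall i, (s (s i) == i) && (s i != i)].

Definition hafnian (R : comPzRingType) (n : nat) (A : 'M[R]_n) : R :=
  \sum_(s : 'S_n | fpf_involution s) \prod_(i : 'I_n | (i < s i)%N) A i (s i).

Definition Tmat (R : comPzRingType) (m : nat) (b : R) : 'M[R]_(m.*2) :=
  \matrix_(i, j) (if i == j then 0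
                  else if ((i.+1 == j) || (j.+1 == i))%N then b + 1 else b).

(* integer coefficient (m+k)! / (k! (m-k)! 2^k) of the Bessel polynomial;
   the division is exact *)
Definition bessel_coef (m k : nat) : nat :=
  ((m + k)`! %/ (k`! * (m - k)`! * 2 ^ k))%N.

Definition bessel (R : comPzRingType) (m : nat) (x : R) : R :=
  \sum_(0 <= k < m.+1) (bessel_coef m k)%:R * x ^+ k.

From HB Require Import structures.
From mathcomp Require Import all_boot all_order all_algebra all_fingroup zify ring.
Set Implicit Arguments. Unset Strict Implicit. Unset Printing Implicit Defensive.
Import GRing.Theory.
Local Open Scope ring_scope.

(* Write T_k for the symmetric weight on vertices 0..2p-1 equal to b on every
   pair, plus 1 on the pairs {i, i+1} with i+1 < k (the edges of a path on the
   first k vertices); T_{b+1,b} is T_{2m} on 2m vertices.  Expanding the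
   hafnian along vertex k and splitting the weight b+1 of the edge {k, k+1}
   as b + 1 gives the Fibonacci-like recursion
        Hf(T_{k+2}) = Hf(T_{k+1}) + Hf(T_k on 2p-2 vertices),
   whose solution is sum_j C(k-j, j) b^(p-j) (2(p-j)-1)!!.  For k = 2p = 2m
   this is sum_q C(m+q, m-q) (2q-1)!! b^q = y_m(b).

   To carry out the expansion and the deletion of vertices we use a hafnian
   of weights on a LIST of vertices, defined by expansion along the first
   vertex (hafs).  It agrees with the hafnian of the principal submatrix on
   a vertex SET (hafset), which is close to the definition and has a
   clean expansion along any vertex (hafset_expand); this makes hafs
   invariant under permutation of the list (hafs_perm), the key tool for
   expanding along a vertex other than the first. *)

(* (2q-1)!! = 1 * 3 * ... * (2q-1), the number of perfect matchings of 2q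
   points. *)
Fixpoint odd_dfact (q : nat) : nat :=
  if q is q'.+1 then (q'.*2.+1 * odd_dfact q')%N else 1%N.

Section SeqHafnian.
Variables (R : comPzRingType) (T : eqType).
Implicit Types (w : T -> T -> R) (s : seq T).

Fixpoint hafs_rec w (n : nat) s : R :=
  match s, n with
  | [::], _ => 1
  | _ :: _, 0 => 0
  | x :: s', n'.+1 => \sum_(y <- s') w x y * hafs_rec w n' (rem y s')
  end.

Definition hafs w s : R := hafs_rec w (size s) s.

Lemma hafs_recE w n s : (size s <= n)%N -> hafs_rec w n s = hafs w s.
Proof.
suff fuel_irr : forall n1 n2 s, (size s <= n1)%N -> (size s <= n2)%N ->
    hafs_rec w n1 s = hafs_rec w n2 s by move=> hn; apply: fuel_irr.
elim=> [|n1 IH] [|n2] [|x s'] //= h1 h2.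
apply: eq_big_seq => y ys; congr (_ * _); apply: IH; rewrite size_rem //=; lia.
Qed.

Lemma hafs_cons w x s :
  hafs w (x :: s) = \sum_(y <- s) w x y * hafs w (rem y s).
Proof.
apply: eq_big_seq => y ys; congr (_ * _).
by apply: hafs_recE; rewrite size_rem // leq_pred.
Qed.

Lemma eq_hafs w w' s : uniq s ->
  (forall x y, x \in s -> y \in s -> x != y -> w x y = w' x y) ->
  hafs w s = hafs w' s.
Proof.
move: {2}(size s) (leqnn (size s)) => n.
elim: n s => [|n IH] [|x s] //= hs /andP[xs us] ww'.
rewrite !hafs_cons; apply: eq_big_seq => y ys; congr (_ * _).
  by apply: ww'; rewrite ?inE ?ys ?eqxx ?orbT //; apply: contraNneq xs => ->.
apply: IH; rewrite ?rem_uniq ?size_rem //; first lia.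
move=> u v /mem_rem us' /mem_rem vs.
by apply: ww'; rewrite inE ?us' ?vs orbT.
Qed.

Lemma hafs_const w s (c : R) k : uniq s -> size s = k.*2 ->
  (forall x y, x \in s -> y \in s -> x != y -> w x y = c) ->
  hafs w s = c ^+ k * (odd_dfact k)%:R.
Proof.
move=> us hs wc; rewrite (@eq_hafs w (fun _ _ => c)) //.
elim: k s us hs {wc} => [|k IH]; first by case=> //= _ _; rewrite mulr1.
case=> // x s /= /andP[_ us] [hs].
rewrite hafs_cons (eq_big_seq (fun _ => c * (c ^+ k * (odd_dfact k)%:R))); last first.
  by move=> y ys; rewrite IH ?rem_uniq // size_rem // hs.
rewrite big_const_seq count_predT iter_addr_0 hs natrM exprS; ring.
Qed.
End SeqHafnian.

Lemma hafs_map (R : comPzRingType) (T U : eqType) (f : T -> U)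
    (w : U -> U -> R) s : injective f ->
  hafs w (map f s) = hafs (fun i j => w (f i) (f j)) s.
Proof.
move=> f_inj; move: {2}(size s) (leqnn (size s)) => n.
elim: n s => [|n IH] [|x s] //= hs.
rewrite !hafs_cons big_map; apply: eq_big_seq => y ys; congr (_ * _).
have map_rem_f u r : map f (rem u r) = rem (f u) (map f r).
  by elim: r => //= v r IHr; rewrite (inj_eq f_inj); case: eqP => //= _; rewrite IHr.
by rewrite -map_rem_f IH // size_rem //; lia.
Qed.

Section SetHafnian.
Variables (R : comPzRingType) (n : nat).
Implicit Types (A : 'M[R]_n) (V : {set 'I_n}) (s u : 'S_n) (x y : 'I_n).

Definition matching_on V s : bool :=
  [forall i, if i \in V then (s (s i) == i) && (s i != i) else s i == i].

Definition hafset A V : R :=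
  \sum_(s | matching_on V s) \prod_(i : 'I_n | (i < s i)%N) A i (s i).

Lemma hafset0 A : hafset A set0 = 1.
Proof.
rewrite /hafset (big_pred1 1%g); first by rewrite big_pred0 // => i; rewrite perm1 ltnn.
move=> s; apply/forallP/eqP => [fix_s|->]; last by move=> i; rewrite inE perm1.
by apply/permP => i; move: (fix_s i); rewrite inE perm1 => /eqP.
Qed.

Lemma matching_on_out V s i : matching_on V s -> i \notin V -> s i = i.
Proof. by move=> /forallP /(_ i) + iV; rewrite (negPf iV) => /eqP. Qed.

Lemma matching_on_in V s i : matching_on V s -> i \in V -> s (s i) = i /\ s i != i.
Proof. by move=> /forallP /(_ i) + iV; rewrite iV => /andP[/eqP]. Qed.

Lemma perm_avoid_fixed u x i : u x = x -> i != x -> u i != x.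
Proof.
by move=> ux; apply: contraNneq => uix; rewrite -ux in uix; rewrite (perm_inj uix).
Qed.

Lemma matching_on_remove V s x y : x \in V -> y \in V -> x != y ->
  matching_on V s -> s x = y -> matching_on (V :\ x :\ y) (s * tperm x y).
Proof.
move=> xV yV xy ms sx; have [sy _] := matching_on_in ms xV; rewrite sx in sy.
apply/forallP => i; rewrite !permM !inE.
have [->|ix] /= := eqVneq i x; first by rewrite andbF sx tpermR.
have [->|iy] /= := eqVneq i y; first by rewrite sy tpermL.
have [iV|iV] /= := boolP (i \in V); last first.
  by rewrite (matching_on_out ms iV) tpermD // eq_sym.
have [ssi si] := matching_on_in ms iV.
have six : s i != x by apply: contra_neq iy => six; rewrite -ssi six.
have siy : s i != y by apply: contra_neq ix => siy; rewrite -ssi siy.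
have t_si : tperm x y (s i) = s i by rewrite tpermD // eq_sym.
by rewrite t_si ssi tpermD ?eqxx // eq_sym.
Qed.

Lemma matching_on_add V u x y : x \in V -> y \in V -> x != y ->
  matching_on (V :\ x :\ y) u ->
  matching_on V (u * tperm x y) && ((u * tperm x y)%g x == y).
Proof.
move=> xV yV xy mu.
have ux : u x = x by apply: (matching_on_out mu); rewrite !inE eqxx andbF.
have uy : u y = y by apply: (matching_on_out mu); rewrite !inE eqxx.
have t_ui i : i != x -> i != y -> tperm x y (u i) = u i.
  by move=> ix iy; rewrite tpermD // eq_sym perm_avoid_fixed.
rewrite permM ux tpermL eqxx andbT; apply/forallP => i; rewrite !permM.
have [->|ix] := eqVneq i x; first by rewrite xV ux tpermL uy tpermR eqxx eq_sym.
have [->|iy] := eqVneq i y; first by rewrite yV uy tpermR ux tpermL eqxx.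
have [iV|iV] := boolP (i \in V).
  have iW : i \in V :\ x :\ y by rewrite !inE ix iy.
  have [uui ui] := matching_on_in mu iW.
  by rewrite (t_ui i) // uui tpermD ?eqxx // eq_sym.
have iW : i \notin V :\ x :\ y by rewrite !inE (negPf iV) !andbF.
by rewrite (matching_on_out mu iW) tpermD // eq_sym.
Qed.

Lemma matching_on_tpermE V u x y : x \in V -> y \in V -> x != y ->
  matching_on V (u * tperm x y) && ((u * tperm x y)%g x == y)
  = matching_on (V :\ x :\ y) u.
Proof.
move=> xV yV xy; apply/idP/idP => [/andP[ms /eqP sx]|]; last exact: matching_on_add.
by rewrite -[u](mulgK (tperm x y)) tpermV matching_on_remove.
Qed.

Lemma prod_pairs_tperm A u x y : (forall i j, A i j = A j i) ->
  x != y -> u x = x -> u y = y ->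
  \prod_(i : 'I_n | (i < (u * tperm x y)%g i)%N) A i ((u * tperm x y)%g i)
  = A x y * \prod_(i : 'I_n | (i < u i)%N) A i (u i).
Proof.
move=> A_sym; wlog lt_xy : x y / (x < y)%N => [wlog_xy xy ux uy|xy ux uy].
  have [/wlog_xy|/wlog_xy|/val_inj exy] := ltngtP x y; [exact| |by rewrite exy eqxx in xy].
  by rewrite tpermC A_sym; apply; rewrite // eq_sym.
have t_ui i : i != x -> i != y -> tperm x y (u i) = u i.
  by move=> ix iy; rewrite tpermD // eq_sym perm_avoid_fixed.
rewrite (bigID (fun i => (i == x) || (i == y))) /=; congr (_ * _).
  rewrite (big_pred1 x) ?permM ?ux ?tpermL // => i; rewrite /= permM.
  have [->|ix] := eqVneq i x; first by rewrite ux tpermL lt_xy.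
  have [->|iy] := eqVneq i y; last by rewrite andbF.
  by rewrite uy tpermR ltnNge (ltnW lt_xy).
apply: eq_big => i; last by case/andP=> _ /norP[ix iy]; rewrite permM t_ui.
have [->|ix] := eqVneq i x; first by rewrite ux ltnn andbF.
have [->|iy] := eqVneq i y; first by rewrite uy ltnn andbF.
by rewrite permM t_ui // andbT.
Qed.

Lemma hafset_expand A V x : (forall i j, A i j = A j i) -> x \in V ->
  hafset A V = \sum_(y in V :\ x) A x y * hafset A (V :\ x :\ y).
Proof.
move=> A_sym xV; rewrite /hafset (partition_big (fun s : 'S_n => s x) (mem (V :\ x))).
  apply: eq_bigr => y; rewrite !inE => /andP[yx yV]; have xy : x != y by rewrite eq_sym.
  rewrite big_distrr /= (reindex_inj (mulIg (tperm x y))) /=.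
  apply: eq_big => u; first exact: matching_on_tpermE.
  rewrite matching_on_tpermE // => mu; apply: prod_pairs_tperm => //.
    by apply: (matching_on_out mu); rewrite !inE eqxx andbF.
  by apply: (matching_on_out mu); rewrite !inE eqxx.
move=> s ms; have [ssx sx] := matching_on_in ms xV; rewrite !inE sx /=.
apply: contraT => sV; have := matching_on_out ms sV; rewrite ssx => e.
by rewrite -e eqxx in sx.
Qed.
End SetHafnian.

Lemma hafs_hafset (R : comPzRingType) n (A : 'M[R]_n) s :
  (forall i j, A i j = A j i) -> uniq s ->
  hafs (fun i j => A i j) s = hafset A [set:: s].
Proof.
move=> A_sym; move: {2}(size s) (leqnn (size s)) => k.
elim: k s => [|k IH] [|x s] //= hs; rewrite ?set_nil ?hafset0 // => /andP[xs us].
rewrite hafs_cons (hafset_expand A_sym (_ : x \in _)); last by rewrite set_cons setU11.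
rewrite set_cons setU1K; last by rewrite inE.
rewrite (big_uniq _ us); apply: eq_big => [y|y ys]; first by rewrite inE.
have -> : [set:: s] :\ y = [set:: rem y s].
  by apply/setP => z; rewrite !inE (mem_rem_uniq _ us) inE.
by rewrite IH ?rem_uniq // size_rem // (leq_trans (leq_pred (size s)) hs).
Qed.

Lemma hafs_perm_ord (R : comPzRingType) n (w : 'I_n -> 'I_n -> R) s1 s2 :
  (forall i j, w i j = w j i) -> uniq s1 -> perm_eq s1 s2 ->
  hafs w s1 = hafs w s2.
Proof.
move=> w_sym u1 p12; have u2 : uniq s2 by rewrite -(perm_uniq p12).
pose A := \matrix_(i, j) w i j : 'M[R]_n.
have wA s : uniq s -> hafs w s = hafset A [set:: s].
  move=> us; rewrite -hafs_hafset //; last by move=> i j; rewrite !mxE.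
  by apply: eq_hafs => // i j _ _ _; rewrite mxE.
by rewrite !wA //; congr hafset; apply/setP => z; rewrite !inE (perm_mem p12).
Qed.

(* The same for vertices labelled by natural numbers, which embed into a large
   enough ordinal type. *)
Lemma hafs_perm (R : comPzRingType) (w : nat -> nat -> R) s1 s2 :
  (forall i j, w i j = w j i) -> uniq s1 -> perm_eq s1 s2 -> hafs w s1 = hafs w s2.
Proof.
move=> w_sym u1 p12; pose N := (\max_(x <- s1) x).+1.
have ltN x : x \in s1 -> (x < N)%N.
  by move=> xs; rewrite ltnS; exact: (@leq_bigmax_seq nat s1 xpredT id x xs).
pose emb := fun x : nat => (inord x : 'I_N).
have embK s : {subset s <= s1} -> map val (map emb s) = s.
  by move=> ss; rewrite -map_comp map_id_in // => x /ss /ltN /inordK.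
have emb_inj : {in s1 &, injective emb}.
  by move=> x y xs ys /(congr1 val); rewrite /= !inordK ?ltN.
rewrite -(embK s1) // -(embK s2) => [|x]; last by rewrite (perm_mem p12).
rewrite !(@hafs_map _ _ _ val _ _ val_inj).
by apply: hafs_perm_ord; rewrite ?(map_inj_in_uniq emb_inj) ?(perm_map emb p12).
Qed.

Definition adjacent (i j : nat) : bool := (i.+1 == j) || (j.+1 == i).

(* Weights of the truncated matrix T_k: b on every pair of vertices, plus 1 on
   the pairs of consecutive vertices among 0, ..., k-1.  On 2m vertices,
   T_{2m} is the matrix T_{b+1,b} of the theorem and T_0, T_1 are constant. *)
Definition path_weight (R : comPzRingType) (b : R) (k i j : nat) : R :=
  b + (if adjacent i j && (maxn i j < k)%N then 1 else 0).

Definition skip2 (k i : nat) : nat := if (i < k)%N then i else i.+2.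

Lemma skip2_inj k : injective (skip2 k).
Proof. by move=> i j; rewrite /skip2; case: ifP; case: ifP => *; lia. Qed.

Lemma map_skip2 k n : (k.+2 <= n)%N ->
  map (skip2 k) (iota 0 n.-2) = iota 0 k ++ iota k.+2 (n - k.+2).
Proof.
move=> hn; have -> : n.-2 = (k + (n - k.+2))%N by lia.
rewrite iotaD map_cat add0n; congr (_ ++ _).
  by apply: map_id_in => i; rewrite mem_iota /skip2 => /andP[_ ->].
rewrite -addn2 addnC iotaDl; apply/eq_in_map => i; rewrite mem_iota /skip2.
by case/andP=> + _; rewrite leqNgt => /negPf ->.
Qed.

Section PathWeight.
Variables (R : comPzRingType) (b : R).
Local Notation T := (path_weight b).

Lemma path_weight_sym k i j : T k i j = T k j i.
Proof. by rewrite /path_weight /adjacent orbC maxnC. Qed.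

Lemma path_weight_grow k y : T k.+2 k y = T k.+1 k y + (y == k.+1)%:R.
Proof.
rewrite /path_weight /adjacent; have [->|hy] := eqVneq y k.+1.
  have -> : maxn k k.+1 = k.+1 by lia.
  by rewrite /= ltnSn ltnn addr0.
by rewrite addr0; congr (_ + _); congr (if _ then _ else _); lia.
Qed.

Lemma path_weight_off k i j : i != k -> j != k -> T k.+2 i j = T k.+1 i j.
Proof.
rewrite /path_weight /adjacent => hi hj; congr (_ + _).
by congr (if _ then _ else _); lia.
Qed.

Lemma path_weight_skip2 k i j : T k.+1 (skip2 k i) (skip2 k j) = T k i j.
Proof.
rewrite /path_weight /adjacent /skip2; congr (_ + _); congr (if _ then _ else _).
by case: ifP; case: ifP => *; lia.
Qed.
End PathWeight.

Section PathHafnianRecursion.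
Variables (R : comPzRingType) (b : R).
Local Notation T := (path_weight b).

Lemma hafs_path_drop2 n k : (k.+2 <= n)%N ->
  hafs (T k.+1) (rem k.+1 (rem k (iota 0 n))) = hafs (T k) (iota 0 n.-2).
Proof.
move=> hn; have u_n := iota_uniq 0 n.
have drop2E : perm_eq (rem k.+1 (rem k (iota 0 n))) (map (skip2 k) (iota 0 n.-2)).
  apply: uniq_perm; rewrite ?rem_uniq ?(map_inj_uniq (@skip2_inj k)) ?iota_uniq //.
  move=> z; rewrite map_skip2 // mem_cat !mem_iota (mem_rem_uniq _ (rem_uniq _ u_n)).
  by rewrite inE (mem_rem_uniq _ u_n) inE mem_iota; apply/idP/idP; lia.
rewrite (hafs_perm (@path_weight_sym _ b _) _ drop2E) ?rem_uniq // hafs_map.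
  by apply: eq_hafs; rewrite ?iota_uniq // => i j _ _ _; rewrite path_weight_skip2.
exact: skip2_inj.
Qed.

(* Expanding along vertex k, the extra 1 on the edge {k, k+1} splits off the
   matchings containing that edge:  Hf(T_{k+2}) = Hf(T_{k+1}) + Hf(T_k) on
   two vertices fewer. *)
Lemma hafs_path_rec n k : (k.+2 <= n)%N ->
  hafs (T k.+2) (iota 0 n) = hafs (T k.+1) (iota 0 n) + hafs (T k) (iota 0 n.-2).
Proof.
move=> hn; have u_n := iota_uniq 0 n.
have k_n : k \in iota 0 n by rewrite mem_iota; lia.
rewrite !(hafs_perm (@path_weight_sym _ b _) u_n (perm_to_rem k_n)) !hafs_cons.
set L := rem k (iota 0 n); rewrite -hafs_path_drop2 // -/L.
have uL : uniq L by rewrite rem_uniq.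
have kL : k \notin L by rewrite mem_rem_uniqF.
have k1L : k.+1 \in L by rewrite mem_rem_uniq // inE mem_iota; lia.
have rem_off y : y \in L -> hafs (T k.+2) (rem y L) = hafs (T k.+1) (rem y L).
  move=> yL; apply: eq_hafs; rewrite ?rem_uniq // => i j /mem_rem iL /mem_rem jL _.
  by apply: path_weight_off; apply: contraNneq kL => <-.
rewrite (eq_big_seq (fun y => T k.+1 k y * hafs (T k.+1) (rem y L)
    + (y == k.+1)%:R * hafs (T k.+1) (rem y L))); last first.
  by move=> y yL; rewrite path_weight_grow mulrDl rem_off.
rewrite big_split /=; congr (_ + _).
rewrite (big_rem _ k1L) /= eqxx mul1r big1_seq ?addr0 // => y /andP[_ yL].
have -> : (y == k.+1) = false by apply: contraTF yL => /eqP->; rewrite mem_rem_uniqF.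
by rewrite mul0r.
Qed.
End PathHafnianRecursion.

(* Pascal's rule along a diagonal of the binomial triangle; it also holds
   (as 0 = 0) when a < j. *)
Lemma bin_diag_rec a j : 'C(a.+1 - j, j.+1) = ('C(a - j, j.+1) + 'C(a - j, j))%N.
Proof.
have [le_ja|lt_aj] := leqP j a; first by rewrite subSn // binS.
have -> : (a.+1 - j = 0)%N by lia.
by rewrite (_ : a - j = 0)%N ?bin0n; [case: j lt_aj | lia].
Qed.

Section PathHafnianClosedForm.
Variables (R : comPzRingType) (b : R).
Local Notation T := (path_weight b).

(* The hafnian of T_k on 2p vertices: choose j pairwise disjoint edges of the
   path on k vertices ('C(k-j, j) ways) to carry the extra weight 1 and match
   the 2(p-j) other vertices freely with weight b. *)
Definition path_haf (p k : nat) : R :=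
  \sum_(j < p.+1) 'C(k - j, j)%:R * (b ^+ (p - j) * (odd_dfact (p - j))%:R).

(* T_0 and T_1 are constant, and only the term j = 0 survives. *)
Lemma hafs_path_const p k : (k <= 1)%N -> hafs (T k) (iota 0 p.*2) = path_haf p k.
Proof.
move=> hk; rewrite (@hafs_const _ _ _ _ b p) ?iota_uniq ?size_iota //; last first.
  move=> x y _ _ /eqP xy; rewrite /path_weight /adjacent.
  have -> : ((x.+1 == y) || (y.+1 == x)) && (maxn x y < k)%N = false.
    by apply/negP => /andP[]; lia.
  by rewrite addr0.
rewrite /path_haf big_ord_recl /= !subn0 bin0 mul1r big1 ?addr0 // => j _.
by rewrite (_ : k - bump 0 j = 0)%N ?bin0n ?mul0r //; rewrite /bump; lia.
Qed.

(* Both sides satisfy the recursion of hafs_path_rec. *)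
Lemma hafs_pathE p k : (k <= p.*2)%N -> hafs (T k) (iota 0 p.*2) = path_haf p k.
Proof.
suff [] : (forall p, k <= p.*2 -> hafs (T k) (iota 0 p.*2) = path_haf p k)%N /\
          (forall p, k.+1 <= p.*2 -> hafs (T k.+1) (iota 0 p.*2) = path_haf p k.+1)%N.
  by move=> closed_k _; apply: closed_k.
elim: k {p} => [|k [IHk IHk1]]; first by split=> p _; apply: hafs_path_const.
split=> // [[|p]] // hp; rewrite hafs_path_rec; last by lia.
rewrite IHk1; last by lia.
rewrite (_ : p.+1.*2.-2 = p.*2) // IHk; last by lia.
rewrite /path_haf [X in X + _ = _]big_ord_recl [RHS]big_ord_recl /= !subn0 !bin0.
rewrite -addrA -big_split; congr (_ + _); apply: eq_bigr => j _ /=.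
by rewrite /bump /= !add1n !subSS bin_diag_rec natrD mulrDl.
Qed.
End PathHafnianClosedForm.

Lemma hafnianE (R : comPzRingType) n (A : 'M[R]_n) : (forall i j, A i j = A j i) ->
  hafnian A = hafs (fun i j => A i j) (enum 'I_n).
Proof.
move=> A_sym; rewrite hafs_hafset ?enum_uniq //; apply: eq_bigl => s.
by apply: eq_forallb => i; rewrite inE mem_enum.
Qed.

Lemma hafnian_Tmat (R : comPzRingType) (b : R) m :
  hafnian (Tmat m b) = hafs (path_weight b m.*2) (iota 0 m.*2).
Proof.
rewrite hafnianE => [|i j]; last by rewrite !mxE eq_sym orbC.
rewrite -val_enum_ord (@hafs_map _ _ _ val); last exact: val_inj.
apply: eq_hafs => [|i j _ _ ij]; first exact: enum_uniq.
rewrite mxE (negPf ij) /path_weight /adjacent gtn_max !ltn_ord andbT.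
by case: ifP; rewrite ?addr0.
Qed.

Lemma fact_double q : ((q.*2)`! = odd_dfact q * q`! * 2 ^ q)%N.
Proof.
elim: q => [|q IH] //; rewrite doubleS !factS IH /= expnS -!mul2n !mulnA; ring.
Qed.

Lemma bessel_coefE m q : (q <= m)%N ->
  bessel_coef m q = ('C(m + q, m - q) * odd_dfact q)%N.
Proof.
move=> le_qm; rewrite /bessel_coef.
have le_mq : (m - q <= m + q)%N by lia.
have -> : (m + q)`! = ('C(m + q, m - q) * odd_dfact q * (q`! * (m - q)`! * 2 ^ q))%N.
  rewrite -(bin_fact le_mq) (_ : m + q - (m - q) = q.*2)%N ?fact_double; [ring | lia].
by rewrite mulnK // !muln_gt0 !fact_gt0 expn_gt0.
Qed.

(* Reading the closed form backwards (j = m - q) gives the Bessel polynomial. *)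
Lemma path_haf_bessel (R : comPzRingType) (b : R) m : path_haf b m m.*2 = bessel m b.
Proof.
rewrite /path_haf /bessel big_mkord (reindex_inj rev_ord_inj) /=.
apply: eq_bigr => q _; have le_qm : (q <= m)%N by rewrite -ltnS.
rewrite subSS bessel_coefE ?leq_subr // natrM.
have -> : (m.*2 - (m - q) = m + q)%N by lia.
have -> : (m - (m - q) = q)%N by lia.
by rewrite -mulrA [b ^+ q * _]mulrC.
Qed.

Unset Implicit Arguments.
Set Strict Implicit.

Theorem mainTheorem4 (R : comPzRingType) (b : R) (m : nat) (hm : (1 <= m)%N) :
  hafnian (Tmat m b) = bessel m b.
Proof. by rewrite hafnian_Tmat hafs_pathE // path_haf_bessel. Qed.
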